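(* Let $E$ and $F$ be complex Banach spaces, let $A_m:\mathrm{dom}(A_m)\subseteq E\to E$ and $B:\mathrm{dom}(B)\subseteq F\to F$ be linear operators, and let $L:\mathrm{dom}(A_m)\to F$ be linear, surjective and bounded with respect to the graph norm of $A_m$. Assume that the restriction $A_0$ of $A_m$ to $\ker(L)$ generates a bounded analytic semigroup $(T_0(t))_{t\ge0}$ on $E$, that $B$ generates a strongly continuous semigroup $(S(t))_{t\ge0}$ on $F$, that $x\mapsto(A_mx,Lx)$, $\mathrm{dom}(A_m)\to E\times F$, is closed, and that $A_0$ and $B$ are boundedly invertible. Let $D_0:=(L|_{\ker(A_m)})^{-1}:F\to E$. Assume moreover that for $y\in\mathrm{dom}(B)$ and $t\ge0$ the operators $Q(t)y=D_0S(t)y-T_0(t)D_0y-\int_0^tT_0(t-s)D_0S(s)By\,\mathrm{d}s$ extend to bounded operators $F\to E$ with $\limsup_{t\downarrow0}\|Q(t)\|<\infty$. Then for every $t_{\max}>0$ there is $C\ge0$ such that for every $h\in[0,t_{\max}]$, every $s_0,s_1\in[0,h]$ and every $y\in\mathrm{dom}(B^2)$, \[ \Bigl\|\int_0^hT_0(h-s)A_0^{-1}D_0S(s)By\,\mathrm{d}s-hT_0(h-s_0)A_0^{-1}D_0S(s_1)By\Bigr\|\le Ch^2\bigl(\|By\|+\|B^2y\|\bigr). \]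
   Context: Under the stated assumptions $L|_{\ker(A_m)}$ is bijective onto $F$ and $D_0$ is a bounded operator $F\to E$. *)

From HB Require Import structures.
From mathcomp Require Import all_boot all_order all_algebra.
From mathcomp Require Import complex.
From mathcomp Require Import all_classical all_reals all_analysis.
Import Order.TTheory GRing.Theory Num.Theory.
Import numFieldNormedType.Exports.

Set Implicit Arguments.
Unset Strict Implicit.
Unset Printing Implicit Defensive.

Local Open Scope classical_set_scope.
Local Open Scope ring_scope.
Local Open Scope complex_scope.

Section Defs.
Variable R : realType.

Section Ops.
Variables U V : normedModType R[i].

Definition linear_map (f : U -> V) : Prop :=
  forall (a : R[i]) (x y : U), f (a *: x + y) = a *: f x + f y.

Definition bounded_op (f : U -> V) : Prop :=
  linear_map f /\ exists M : R, forall x, `|f x| <= M%:C * `|x|.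

Definition lin_subspace (D : set U) : Prop :=
  D 0 /\ forall (a : R[i]) x y, D x -> D y -> D (a *: x + y).

(* f is linear on the subspace D (an operator with domain D) *)
Definition linear_on (D : set U) (f : U -> V) : Prop :=
  forall (a : R[i]) x y, D x -> D y -> f (a *: x + y) = a *: f x + f y.
End Ops.

Section Semigroups.
Variable E : completeNormedModType R[i].

Definition C0_semigroup (T : R -> E -> E) : Prop :=
  [/\ (forall t, 0 <= t -> bounded_op (T t)),
      (forall x, T 0 x = x),
      (forall t s x, 0 <= t -> 0 <= s -> T (t + s) x = T t (T s x)) &
      (forall x, (fun t => T t x) @ at_right 0 --> x)].

Definition generates (D : set E) (A : E -> E) (T : R -> E -> E) : Prop :=
  C0_semigroup T /\
  forall x,
    (D x <-> exists y : E, (fun h : R => (h^-1)%:C *: (T h x - x)) @ at_right 0 --> y)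
    /\ (D x -> (fun h : R => (h^-1)%:C *: (T h x - x)) @ at_right 0 --> A x).

Definition sector (d : R) : set R[i]^o :=
  [set z | exists r th : R, [/\ 0 < r, `|th| < d & z = (r * cos th) +i* (r * sin th)]].

(* bounded analytic semigroup (Engel-Nagel, Def. II.4.5): T extends to a
   (strongly) holomorphic semigroup on a sector Sigma_d, 0 < d <= pi/2,
   strongly continuous at 0 and bounded on every smaller sector. *)
Definition bounded_analytic (T : R -> E -> E) : Prop :=
  exists d : R, 0 < d <= pi / 2 /\
  exists Tc : R[i]^o -> E -> E,
  [/\ (forall t x, 0 <= t -> Tc (t%:C : R[i]^o) x = T t x),
      (forall z, sector d z -> linear_map (Tc z)),
      (forall z1 z2 x, sector d z1 -> sector d z2 -> Tc (z1 + z2) x = Tc z1 (Tc z2 x)),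
      (forall z x, sector d z -> derivable (fun w => Tc w x) z 1) &
      (forall d' x, 0 < d' < d ->
          (fun w => Tc w x) @ within (sector d') (nbhs (0 : R[i]^o)) --> x)] /\
      (forall d', 0 < d' < d -> exists M : R,
          forall z x, sector d' z -> `|Tc z x| <= M%:C * `|x|).

(* E-valued integral over [a, b]: limit of (left) Riemann sums on uniform
   partitions.  For continuous integrands this is the Riemann/Bochner integral. *)
Definition riemann_sum (f : R -> E) (a b : R) (n : nat) : E :=
  \sum_(k < n.+1) (((b - a) / n.+1%:R)%:C *: f (a + (b - a) * k%:R / n.+1%:R)).

Definition vintegral (f : R -> E) (a b : R) : E := limn (riemann_sum f a b).
End Semigroups.
End Defs.

(* Put g(a, b) := T_0(h - a) A_0^-1 D_0 S(b) By. Since A_0^-1 z is in the domain of the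
   generator A_0 with A_0 A_0^-1 z = z, and By is in the domain of B, the semigroup orbits
   through these points are Lipschitz, so g is Lipschitz on [0, h]^2 in each variable, with
   constants M_T^2 |D_0| M_S |By| and M_T |A_0^-1| |D_0| M_S^2 |B^2 y|, where M_T and M_S bound
   T_0 and S on [0, t_max]. Hence the integral of s |-> g(s, s) over [0, h] differs from
   h g(s_0, s_1) by at most C h^2 (|By| + |B^2 y|). M_T comes from bounded analyticity and M_S
   from the uniform boundedness of a C_0-semigroup on compact intervals. *)

From HB Require Import structures.
From mathcomp Require Import all_boot all_order all_algebra.
From mathcomp Require Import complex.
From mathcomp Require Import all_classical all_reals all_analysis.
From mathcomp Require Import ring lra zify.
Import Order.TTheory GRing.Theory Num.Theory.
Import numFieldNormedType.Exports.
Local Open Scope classical_set_scope.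
Local Open Scope ring_scope.
Local Open Scope complex_scope.

Set Implicit Arguments.
Unset Strict Implicit.
Unset Printing Implicit Defensive.

Section RealNorm.
Variables (R : realType) (V : normedModType R[i]).

(* The norm of a normed module over [R[i]] is complex-valued; its real part
   [rnorm] makes the ordered-field tactics available. *)
Definition rnorm (x : V) : R := complex.Re `|x|.

Lemma normE (x : V) : `|x| = (rnorm x)%:C.
Proof. exact/esym/RRe_real/ger0_real. Qed.

Lemma rnorm_ge0 (x : V) : 0 <= rnorm x.
Proof. by rewrite -ler0c -normE. Qed.

Lemma rnorm0 : rnorm 0 = 0.
Proof. by rewrite /rnorm normr0. Qed.

Lemma rnorm_eq0 (x : V) : (rnorm x == 0) = (x == 0).
Proof. by rewrite -[RHS]normr_eq0 normE fmorph_eq0. Qed.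

Lemma rnormN (x : V) : rnorm (- x) = rnorm x.
Proof. by rewrite /rnorm normrN. Qed.

Lemma rdistC (x y : V) : rnorm (x - y) = rnorm (y - x).
Proof. by rewrite /rnorm distrC. Qed.

Lemma ler_rnormD (x y : V) : rnorm (x + y) <= rnorm x + rnorm y.
Proof. by have := ler_normD x y; rewrite !normE -rmorphD lecR. Qed.

Lemma ler_rdistD (x y z : V) : rnorm (x - z) <= rnorm (x - y) + rnorm (y - z).
Proof. by rewrite -[x - z](subrKA y) ler_rnormD. Qed.

Lemma rnormZ (r : R) (x : V) : rnorm (r%:C *: x) = `|r| * rnorm x.
Proof.
apply: (@complexI R); rewrite -normE normrZ normE rmorphM; congr (_ * _).
by rewrite normc_def /= expr0n /= addr0 sqrtr_sqr.
Qed.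

Lemma rnorm_le (x : V) (M c : R) : `|x| <= M%:C * c%:C -> rnorm x <= M * c.
Proof. by rewrite normE -rmorphM lecR. Qed.

End RealNorm.

Section LinearMap.
Variables (R : realType) (U V : normedModType R[i]) (f : U -> V).
Hypothesis f_lin : linear_map f.

HB.instance Definition _ := GRing.isLinear.Build _ _ _ _ f f_lin.

Lemma linear_map0 : f 0 = 0. Proof. exact: linear0. Qed.
Lemma linear_mapD x y : f (x + y) = f x + f y. Proof. exact: linearD. Qed.
Lemma linear_mapB x y : f (x - y) = f x - f y. Proof. exact: linearB. Qed.
Lemma linear_mapZ a x : f (a *: x) = a *: f x. Proof. exact: linearZ. Qed.

End LinearMap.

Lemma bounded_opP (R : realType) (U V : normedModType R[i]) (f : U -> V) :
  bounded_op f -> exists2 M, 0 <= M & forall x, rnorm (f x) <= M * rnorm x.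
Proof.
move=> [_ [M HM]]; exists (Num.max M 0); first by rewrite le_max lexx orbT.
move=> x; have := HM x; rewrite (normE x) => /rnorm_le /le_trans; apply.
by rewrite ler_wpM2r ?rnorm_ge0 // le_max lexx.
Qed.

Lemma cvg_at_right0_rdist (R : realType) (V : normedModType R[i]) (f : R -> V) a :
  f @ at_right 0 --> a ->
  forall e : R, 0 < e -> exists2 d : R, 0 < d & forall k, 0 < k < d -> rnorm (f k - a) < e.
Proof.
move=> /cvgr_dist_lt fa e e0; have := fa e%:C; rewrite ltcR => /(_ e0).
rewrite near_withinE /= => /nbhs_ballP[d /= d0 Hd]; exists d => // k /andP[k0 kd].
have := Hd k; rewrite -ball_normE /= sub0r normrN ger0_norm ?ltW // => /(_ kd k0).
by rewrite normE ltcR rdistC.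
Qed.

Section SemigroupOrbit.
Variables (R : realType) (V : normedModType R[i]) (T : R -> V -> V) (M tau : R).
Hypothesis M_ge0 : 0 <= M.
Hypothesis T_lin : forall t, 0 <= t -> linear_map (T t).
Hypothesis T_id : forall x, T 0 x = x.
Hypothesis T_semi : forall t s x, 0 <= t -> 0 <= s -> T (t + s) x = T t (T s x).
Hypothesis T_bound : forall t x, 0 <= t <= tau -> rnorm (T t x) <= M * rnorm x.

Lemma semigroup_iter_sub_le (w : V) (k : R) (j : nat) : 0 <= k -> j%:R * k <= tau ->
  rnorm (T (j%:R * k) w - w) <= j%:R * M * rnorm (T k w - w).
Proof.
move=> k0; elim: j => [|j IH] hj; first by rewrite !mul0r T_id subrr rnorm0.
have jk0 : 0 <= j%:R * k by rewrite mulr_ge0.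
have jk_tau : j%:R * k <= tau by apply: le_trans hj; rewrite -natr1 mulrDl mul1r; lra.
have -> : j.+1%:R * k = j%:R * k + k by rewrite -natr1 mulrDl mul1r.
rewrite T_semi // -[_ - w](subrKA (T (j%:R * k) w)) -(linear_mapB (T_lin jk0)).
apply: le_trans (ler_rnormD _ _) _.
have h : rnorm (T (j%:R * k) (T k w - w)) <= M * rnorm (T k w - w).
  by apply: T_bound; rewrite jk0 jk_tau.
by apply: le_trans (lerD h (IH jk_tau)) _; rewrite -natr1; lra.
Qed.

Variables (w a : V).
Hypothesis w_deriv : (fun k : R => (k^-1)%:C *: (T k w - w)) @ at_right 0 --> a.

Lemma semigroup_orbit_sub_le t : 0 <= t <= tau -> rnorm (T t w - w) <= M * t * rnorm a.
Proof.
move=> /andP[t0 t_tau]; have [->|tn0] := eqVneq t 0.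
  by rewrite T_id subrr rnorm0 mulr0 mul0r.
have tp : 0 < t by rewrite lt_def tn0.
apply/ler_addgt0Pr => e e0.
pose eps := e / (M * t + 1).
have Mt0 : 0 <= M * t by rewrite mulr_ge0 // ltW.
have eps0 : 0 < eps by rewrite divr_gt0 // ltr_wpDl.
have [d d0 Hd] := cvg_at_right0_rdist w_deriv eps0.
pose n := Num.truncn (t / d); pose k := t / n.+1%:R.
have n0 : 0 < n.+1%:R :> R by rewrite ltr0n.
have k0 : 0 < k by rewrite divr_gt0.
have kd : k < d by rewrite /k ltr_pdivrMr // mulrC -ltr_pdivrMr // truncnS_gt.
have nk : n.+1%:R * k = t by rewrite /k mulrC divfK // gt_eqF.
have := semigroup_iter_sub_le w (j := n.+1) (ltW k0); rewrite nk => /(_ t_tau) /le_trans; apply.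
have step : rnorm (T k w - w) <= k * (rnorm a + eps).
  have hk : rnorm ((k^-1)%:C *: (T k w - w) - a) <= eps by apply/ltW/Hd; rewrite k0 kd.
  have := ler_rdistD ((k^-1)%:C *: (T k w - w)) a 0.
  rewrite !subr0 rnormZ ger0_norm => [hq|]; last by rewrite invr_ge0 ltW.
  rewrite -[leLHS](mulVKf (lt0r_neq0 k0)) ler_pM2l //.
  by apply: le_trans hq _; rewrite addrC lerD2l.
apply: le_trans (ler_wpM2l _ step) _; first by rewrite mulr_ge0 // ltW.
have -> : n.+1%:R * M * (k * (rnorm a + eps)) = M * t * rnorm a + M * t * eps.
  by rewrite -nk; ring.
by rewrite lerD2l /eps mulrA ler_pdivrMr ?ltr_wpDl //; nra.
Qed.

Lemma semigroup_orbit_lipschitz t t' : 0 <= t <= tau -> 0 <= t' <= tau ->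
  rnorm (T t w - T t' w) <= M * M * `|t - t'| * rnorm a.
Proof.
wlog tt : t t' / t' <= t => [hwlog|] ht ht'.
  have [/hwlog|/ltW/hwlog] := leP t' t; first exact.
  by move=> /(_ ht' ht); rewrite rdistC distrC.
have /andP[t'0 _] := ht'.
have d_ge0 : 0 <= t - t' by rewrite subr_ge0.
have -> : T t w - T t' w = T t' (T (t - t') w - w).
  by rewrite (linear_mapB (T_lin t'0)) -T_semi // subrKC.
apply: le_trans (T_bound _ ht') _.
have hd : 0 <= t - t' <= tau by rewrite d_ge0 /=; case/andP: ht => _; lra.
rewrite ger0_norm // -!mulrA ler_wpM2l // mulrA.
exact: semigroup_orbit_sub_le.
Qed.

End SemigroupOrbit.

Section Cauchy.
Variables (R : realType) (V : completeNormedModType R[i]).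

Lemma rdist_lim_le (u : nat -> V) (l c : V) (b : R) (N : nat) : u @ \oo --> l ->
  (forall n, (N <= n)%N -> rnorm (u n - c) <= b) -> rnorm (l - c) <= b.
Proof.
move=> /cvgr_dist_lt ul ub; apply/ler_addgt0Pr => e e0.
have := ul e%:C; rewrite ltcR => /(_ e0) [M _ HM].
pose n := maxn N M; have := HM n (leq_maxr _ _); rewrite /= normE ltcR => /ltW lun.
by apply: le_trans (ler_rdistD _ (u n) _) _; rewrite addrC lerD ?ub ?leq_maxl.
Qed.

Lemma rdist_cauchy_cvg (u : nat -> V) :
  (forall e : R, 0 < e -> exists N, forall n, (N <= n)%N -> rnorm (u n - u N) < e) ->
  u @ \oo --> lim (u @ \oo).
Proof.
move=> u_cauchy; apply: cauchy_cvg; apply: cauchy_exP => e e0.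
have eE := RRe_real (gtr0_real e0).
have [N HN] : exists N, forall n, (N <= n)%N -> rnorm (u n - u N) < complex.Re e.
  by apply: u_cauchy; rewrite -ltcR eE.
by exists (u N), N => // n /= Nn; rewrite -ball_normE /= normE -eE ltcR rdistC HN.
Qed.

Lemma geometric_steps_cvg (u : nat -> V) (q : R) : 0 <= q < 1 ->
  (forall k, rnorm (u k.+1 - u k) <= q ^+ k) ->
  exists2 l, u @ \oo --> l & forall n, rnorm (l - u n) <= q ^+ n / (1 - q).
Proof.
move=> /andP[q0 q1] steps; have q1p : 0 < 1 - q by rewrite subr_gt0.
have tail n m : (n <= m)%N -> rnorm (u m - u n) <= q ^+ n / (1 - q).
  move=> /subnKC <-; set j := (m - n)%N; clearbody j.
  suff : rnorm (u (n + j)%N - u n) <= q ^+ n * (1 - q ^+ j) / (1 - q).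
    move=> /le_trans; apply; rewrite ler_pM2r ?invr_gt0 // ler_piMr ?exprn_ge0 //.
    by rewrite lerBlDr lerDl exprn_ge0.
  elim: j => [|j IH]; first by rewrite addn0 subrr rnorm0 expr0 subrr mulr0 mul0r.
  apply: le_trans (ler_rdistD _ (u (n + j)%N) _) _; rewrite addnS.
  apply: le_trans (lerD (steps _) IH) _; rewrite exprD exprS.
  by rewrite le_eqVlt; apply/orP; left; apply/eqP; field; rewrite lt0r_neq0.
have cvq : (q ^+ n) @[n --> \oo] --> (0 : R).
  by rewrite exprn_geometric; apply: cvg_geometric; rewrite ger0_norm.
have u_cvg : u @ \oo --> lim (u @ \oo).
  apply: rdist_cauchy_cvg => e e0.
  have [N _ HN] := (cvgrPdist_lt _ _).1 cvq _ (mulr_gt0 q1p e0).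
  exists N => n Nn; apply: le_lt_trans (tail _ _ Nn) _; rewrite ltr_pdivrMr // mulrC.
  by have := HN N (leqnn N); rewrite sub0r normrN ger0_norm ?exprn_ge0.
exists (lim (u @ \oo)) => // n.
by apply: (rdist_lim_le (N := n) u_cvg) => m; apply: tail.
Qed.

End Cauchy.

Section OperatorNorm.
Variables (R : realType) (U V : normedModType R[i]) (f : U -> V).
Hypothesis f_bounded : bounded_op f.

Definition opnorm : R := sup [set rnorm (f u) | u in [set u | rnorm u <= 1]].

Let f_lin : linear_map f := f_bounded.1.

Let opnorm_has_sup : has_sup [set rnorm (f u) | u in [set u | rnorm u <= 1]].
Proof.
have [M M0 HM] := bounded_opP f_bounded.
split; first by exists (rnorm (f 0)), 0; rewrite //= rnorm0.
by exists M => _ [u /= u1 <-]; apply: le_trans (HM u) _; rewrite ler_piMr.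
Qed.

Lemma opnorm_ge0 : 0 <= opnorm.
Proof.
apply: le_trans (sup_upper_bound opnorm_has_sup _); first exact: (rnorm_ge0 (f 0)).
by exists 0; rewrite //= rnorm0.
Qed.

Lemma ler_opnorm x : rnorm (f x) <= opnorm * rnorm x.
Proof.
have [/eqP x0|xn0] := eqVneq (rnorm x) 0.
  by move: x0; rewrite rnorm_eq0 => /eqP->; rewrite (linear_map0 f_lin) !rnorm0 mulr0.
have xp : 0 < rnorm x by rewrite lt_def xn0 rnorm_ge0.
have /(sup_upper_bound opnorm_has_sup) : [set rnorm (f u) | u in [set u | rnorm u <= 1]]
    (rnorm (f (((rnorm x)^-1)%:C *: x))).
  exists (((rnorm x)^-1)%:C *: x) => //=.
  by rewrite rnormZ ger0_norm ?invr_ge0 ?rnorm_ge0 // mulVf // lt0r_neq0.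
rewrite (linear_mapZ f_lin) rnormZ ger0_norm ?invr_ge0 ?rnorm_ge0 //.
by rewrite -/opnorm ler_pdivrMl // mulrC.
Qed.

Lemma opnorm_approx e : 0 < e -> exists2 u, rnorm u <= 1 & opnorm - e < rnorm (f u).
Proof. by move=> /sup_adherent/(_ opnorm_has_sup) [_ [u u1 <-]]; exists u. Qed.

End OperatorNorm.

Lemma rnorm_le_max_addr_subr (R : realType) (U V : normedModType R[i]) (g : U -> V) y z :
  linear_map g -> rnorm (g z) <= Num.max (rnorm (g (y + z))) (rnorm (g (y - z))).
Proof.
move=> g_lin; have : 2%:C *: g z = g (y + z) - g (y - z).
  rewrite -(linear_mapB g_lin) opprB addrC subrKA (linear_mapD g_lin).
  by rewrite rmorph_nat scaler_nat mulr2n.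
move=> /(congr1 (@rnorm _ _)); rewrite rnormZ ger0_norm // => e.
have := ler_rnormD (g (y + z)) (- g (y - z)); rewrite rnormN -e.
set m := Num.max _ _; have m1 : rnorm (g (y + z)) <= m by rewrite le_max lexx.
have m2 : rnorm (g (y - z)) <= m by rewrite le_max lexx orbT.
lra.
Qed.

(* The Banach-Steinhaus theorem of MathComp-Analysis is stated for real scalars
   only, so the uniform boundedness needed here is obtained by a gliding hump. *)
Section GlidingHump.
Variables (R : realType) (F : completeNormedModType R[i]) (V : normedModType R[i]).
Variable f : nat -> F -> V.
Hypothesis f_bounded : forall k, bounded_op (f k).

Let f_lin k : linear_map (f k) := (f_bounded k).1.

Lemma hump_sequence (u : nat -> F) (q : R) : 0 <= q -> (forall k, rnorm (u k) <= 1) ->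
  exists xs : nat -> F, (forall k, rnorm (xs k.+1 - xs k) <= q ^+ k) /\
    (forall k, q ^+ k * rnorm (f k (u k)) <= rnorm (f k (xs k.+1))).
Proof.
move=> q0 u1; pose hump_step k y := let z := (q ^+ k)%:C *: u k in
  if rnorm (f k (y - z)) <= rnorm (f k (y + z)) then y + z else y - z.
pose xs := fix xs k := if k is k'.+1 then hump_step k' (xs k') else 0.
exists xs; split => k.
  rewrite /= /hump_step; case: ifP => _; rewrite addrAC subrr add0r ?rnormN rnormZ;
  by rewrite ger0_norm ?exprn_ge0 //; apply: ler_piMr; rewrite ?exprn_ge0.
have := rnorm_le_max_addr_subr (xs k) ((q ^+ k)%:C *: u k) (f_lin k).
rewrite (linear_mapZ (f_lin k)) rnormZ ger0_norm ?exprn_ge0 // => /le_trans; apply.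
rewrite /= /hump_step; case: ifP => hc; rewrite ge_max ?lexx ?hc //= andbT.
by rewrite ltW // ltNge hc.
Qed.

Hypothesis f_large : forall k, 6 * 3 ^+ k * k.+1%:R < opnorm (f k).

(* Steps of size 3^-k leave a tail of norm at most 3^-k/2 after step k, so
   [rnorm (f k x) >= 3^-k (2/3 - 1/2) opnorm (f k) > k + 1]. *)
Lemma gliding_hump : exists x, forall k, k.+1%:R < rnorm (f k x).
Proof.
have [u u1 fu] : exists2 u : nat -> F,
    forall k, rnorm (u k) <= 1 & forall k, 2 / 3 * opnorm (f k) < rnorm (f k (u k)).
  have /choice[u Hu] k : exists u, rnorm u <= 1 /\ 2 / 3 * opnorm (f k) < rnorm (f k u).
    have N0 : 0 < opnorm (f k) / 3.
      by rewrite divr_gt0 // (le_lt_trans _ (f_large k)) // !mulr_ge0 ?exprn_ge0.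
    have [v v1 fv] := opnorm_approx (f_bounded k) N0.
    by exists v; split => //; apply: le_lt_trans fv; lra.
  by exists u => k; case: (Hu k).
pose q : R := 3^-1; have q0 : 0 <= q by rewrite invr_ge0.
have [xs [xs_step xs_large]] := hump_sequence q0 u1.
have [|x _ x_near] := geometric_steps_cvg (q := q) _ xs_step.
  by rewrite q0 invf_lt1 ?ltr1n.
exists x => k; set N := opnorm (f k); set Q := q ^+ k.
have Q0 : 0 < Q by rewrite exprn_gt0 // invr_gt0.
have x_tail : N * rnorm (x - xs k.+1) <= N * (Q / 2).
  apply: ler_wpM2l; first exact: opnorm_ge0.
  have q1 : q / (1 - q) = 2^-1 by rewrite /q; field.
  by apply: le_trans (x_near k.+1) _; rewrite exprSr -mulrA q1.
have tri := ler_rdistD (f k (xs k.+1)) (f k x) 0.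
rewrite !subr0 rdistC -(linear_mapB (f_lin k)) in tri.
have op := ler_opnorm (f_bounded k) (x - xs k.+1).
have a1 : Q * (2 / 3 * N) < Q * rnorm (f k (u k)) by rewrite ltr_pM2l //; apply: fu.
have a2 : Q * (6 * 3 ^+ k * k.+1%:R) < Q * N by rewrite ltr_pM2l //; apply: f_large.
have QE : Q * (6 * 3 ^+ k * k.+1%:R) = 6 * k.+1%:R.
  by rewrite /Q /q exprVn; field; rewrite expf_neq0.
have := xs_large k; rewrite -/Q -/N in op a1 a2 x_tail *.
lra.
Qed.

End GlidingHump.

Section C0SemigroupBound.
Variables (R : realType) (F : completeNormedModType R[i]) (S : R -> F -> F).
Hypothesis S_bounded : forall t, 0 <= t -> bounded_op (S t).
Hypothesis S_id : forall x, S 0 x = x.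
Hypothesis S_cont : forall x, (fun t => S t x) @ at_right 0 --> x.
Hypothesis S_semi : forall t s x, 0 <= t -> 0 <= s -> S (t + s) x = S t (S s x).

(* Otherwise there are [t_k <= 1/(k+1)] with [opnorm (S t_k) > 6 3^k (k+1)], and the
   gliding hump gives an [x] with [rnorm (S t_k x) > k + 1], contradicting [S t x --> x]. *)
Lemma C0_semigroup_local_bound : exists d M : R,
  [/\ 0 < d, 0 <= M & forall t x, 0 <= t <= d -> rnorm (S t x) <= M * rnorm x].
Proof.
apply: contrapT => unbounded.
pose c k : R := 6 * 3 ^+ k * k.+1%:R.
have c_ge0 k : 0 <= c k by rewrite !mulr_ge0 ?exprn_ge0.
have /choice[t Ht] k : exists t, 0 <= t <= k.+1%:R^-1 /\ c k < opnorm (S t).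
  have : ~ forall t x, 0 <= t <= k.+1%:R^-1 -> rnorm (S t x) <= c k * rnorm x.
    by move=> bound; apply: unbounded; exists k.+1%:R^-1, (c k); split.
  move=> /existsNP[t /existsNP[x /not_implyP[t_in /negP]]].
  rewrite -ltNge => big; exists t; split => //; rewrite ltNge; apply/negP => small.
  have t0 : 0 <= t by case/andP: t_in.
  have := ler_opnorm (S_bounded t0) x; have := rnorm_ge0 x.
  have := ler_wpM2r (rnorm_ge0 x) small; lra.
have [x Hx] := gliding_hump (fun k => S_bounded (proj1 (andP (Ht k).1))) (fun k => (Ht k).2).
have [d d0 Hd] := cvg_at_right0_rdist (S_cont (x := x)) ltr01.
pose k := Num.truncn (d^-1 + rnorm x + 1).
have hk : d^-1 + rnorm x + 1 < k.+1%:R by apply: truncnS_gt.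
have [/andP[tk0 tk] _] := Ht k; have := Hx k.
have dinv : 0 < d^-1 by rewrite invr_gt0.
have [->|tkn0] := eqVneq (t k) 0; first by rewrite S_id; lra.
have tkd : t k < d.
  apply: le_lt_trans tk _; rewrite -[d]invrK ltf_pV2 ?posrE ?ltr0n //.
  by have := rnorm_ge0 x; lra.
have := Hd (t k); rewrite lt_def tkn0 tk0 tkd => /(_ isT) near1.
by have := ler_rdistD (S (t k) x) x 0; rewrite !subr0; lra.
Qed.

Lemma C0_semigroup_bounded_on tau : exists2 M : R, 0 <= M &
  forall t x, 0 <= t <= tau -> rnorm (S t x) <= M * rnorm x.
Proof.
have [d [M0 [d0 M00 HM]]] := C0_semigroup_local_bound.
pose M := Num.max M0 1.
have M1 : 1 <= M by rewrite le_max lexx orbT.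
have M0M : M0 <= M by rewrite le_max lexx.
have iter n : forall t x, 0 <= t <= n%:R * d -> rnorm (S t x) <= M ^+ n * rnorm x.
  elim: n => [|n IH] t x.
    rewrite mul0r => /andP[t0 t_le].
    by rewrite (@le_anti _ _ t 0) ?t0 ?t_le // S_id expr0 mul1r.
  move=> /andP[t0 t_le]; have Mn1 : 1 <= M ^+ n by rewrite exprn_ege1.
  have [td|dt] := lerP t d.
    apply: le_trans (HM _ _ _) _; first by rewrite t0 td.
    by rewrite ler_wpM2r ?rnorm_ge0 // exprS (le_trans M0M) // ler_peMr // (le_trans ler01).
  rewrite -(subrKC d t) S_semi ?subr_ge0 ?(ltW d0) ?(ltW dt) //.
  apply: le_trans (HM _ _ _) _; first by rewrite (ltW d0) lexx.
  have /IH t_le' : 0 <= t - d <= n%:R * d.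
    by rewrite subr_ge0 ltW //= lerBlDl; move: t_le; rewrite -natr1 mulrDl mul1r addrC.
  apply: le_trans (ler_wpM2l M00 (t_le' x)) _.
  by rewrite exprS mulrA ler_wpM2r ?rnorm_ge0 // ler_wpM2r // exprn_ge0 // (le_trans ler01).
exists (M ^+ (Num.truncn (tau / d)).+1); first by rewrite exprn_ge0 // (le_trans ler01).
move=> t x /andP[t0 t_le]; apply: iter; rewrite t0 (le_trans t_le) //.
by rewrite ltW // -ltr_pdivrMr // truncnS_gt.
Qed.

End C0SemigroupBound.

Section RiemannSums.
Variables (R : realType) (V : completeNormedModType R[i]).

Lemma ler_rnorm_sum (I : Type) (r : seq I) (P : pred I) (F : I -> V) (G : I -> R) :
  (forall i, P i -> rnorm (F i) <= G i) ->
  rnorm (\sum_(i <- r | P i) F i) <= \sum_(i <- r | P i) G i.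
Proof.
move=> FG; apply: (big_ind2 (fun x y => rnorm x <= y)) => //; first by rewrite rnorm0.
by move=> x1 x2 y1 y2 h1 h2; apply: le_trans (ler_rnormD _ _) (lerD h1 h2).
Qed.

Definition uniform_riemann_sum (g : R -> V) (h : R) (N : nat) : V :=
  \sum_(i < N) (h / N%:R)%:C *: g (h * i%:R / N%:R).

Lemma riemann_sumE g h n : riemann_sum g 0 h n = uniform_riemann_sum g h n.+1.
Proof. by apply: eq_bigr => i _; rewrite subr0 add0r. Qed.

Lemma riemann_node_in (h : R) (i N : nat) : 0 <= h -> (i <= N)%N -> (0 < N)%N ->
  0 <= h * i%:R / N%:R <= h.
Proof.
move=> h0 iN N0; rewrite divr_ge0 ?mulr_ge0 ?ler0n //=.
by rewrite ler_pdivrMr ?ltr0n // ler_wpM2l // ler_nat.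
Qed.

Lemma uniform_riemann_sum_sub_le g h c rho N : 0 <= h -> (0 < N)%N ->
  (forall s, 0 <= s <= h -> rnorm (g s - c) <= rho) ->
  rnorm (uniform_riemann_sum g h N - h%:C *: c) <= h * rho.
Proof.
move=> h0 N0 g_near; have Nn0 : N%:R != 0 :> R by rewrite pnatr_eq0 -lt0n.
have -> : h%:C *: c = \sum_(i < N) (h / N%:R)%:C *: c.
  by rewrite sumr_const card_ord scalerMnl -rmorphMn -mulr_natr divfK.
rewrite -sumrB; apply: le_trans (ler_rnorm_sum _ (G := fun=> h / N%:R * rho) _) _.
  move=> i _; rewrite -scalerBr rnormZ ger0_norm ?divr_ge0 ?ler0n //.
  by rewrite ler_wpM2l ?divr_ge0 ?ler0n // g_near // riemann_node_in // ltnW.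
by rewrite /= sumr_const card_ord -[_ *+ N]mulr_natr mulrAC divfK.
Qed.

Lemma uniform_riemann_sum_refine g h K N M : 0 <= h -> 0 <= K -> (0 < N)%N -> (0 < M)%N ->
  (forall s s', 0 <= s <= h -> 0 <= s' <= h -> rnorm (g s - g s') <= K * `|s - s'|) ->
  rnorm (uniform_riemann_sum g h N - uniform_riemann_sum g h (N * M)) <= K * h ^+ 2 / N%:R.
Proof.
move=> h0 K0 N0 M0 g_lip.
have Nn0 : N%:R != 0 :> R by rewrite pnatr_eq0 -lt0n.
have Mn0 : M%:R != 0 :> R by rewrite pnatr_eq0 -lt0n.
pose a := h / (N * M)%N%:R.
have a0 : 0 <= a by rewrite divr_ge0 ?ler0n.
have fine : uniform_riemann_sum g h (N * M) = \sum_(i < N) \sum_(j < M)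
    a%:C *: g (h * (i * M + j)%N%:R / (N * M)%N%:R).
  rewrite /uniform_riemann_sum.
  rewrite -(big_mkord xpredT (fun l => a%:C *: g (h * l%:R / (N * M)%N%:R))).
  rewrite big_nat_mul big_mkord.
  apply: eq_bigr => i _; rewrite -{1}[(i * M)%N]add0n big_addn mulSn addnK big_mkord.
  by apply: eq_bigr => j _; rewrite addnC.
have coarse : uniform_riemann_sum g h N =
    \sum_(i < N) \sum_(j < M) a%:C *: g (h * i%:R / N%:R).
  apply: eq_bigr => i _; rewrite sumr_const card_ord scalerMnl -rmorphMn.
  by congr (_%:C *: _); rewrite -[_ *+ M]mulr_natr /a natrM; field; rewrite Nn0 Mn0.
rewrite fine coarse -sumrB.
apply: le_trans (ler_rnorm_sum _ (G := fun=> \sum_(j < M) a * (K * (h / N%:R))) _) _.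
  move=> i _; rewrite -sumrB; apply: ler_rnorm_sum => j _.
  rewrite -scalerBr rnormZ ger0_norm // ler_wpM2l //.
  have iMj : (i * M + j <= N * M)%N by have := ltn_ord i; have := ltn_ord j; nia.
  have NM0 : (0 < N * M)%N by rewrite muln_gt0 N0 M0.
  have node_i := riemann_node_in h0 (ltnW (ltn_ord i)) N0.
  apply: le_trans (g_lip _ _ node_i (riemann_node_in h0 iMj NM0)) _.
  rewrite ler_wpM2l // distrC.
  have -> : h * (i * M + j)%N%:R / (N * M)%N%:R - h * i%:R / N%:R = h * j%:R / (N * M)%N%:R.
    by rewrite natrD !natrM; field; rewrite Nn0 Mn0.
  rewrite ger0_norm ?divr_ge0 ?mulr_ge0 ?ler0n // natrM invfM mulrA ler_pdivrMr ?ltr0n //.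
  by rewrite mulrAC ler_wpM2l ?divr_ge0 ?ler0n // ler_nat ltnW.
rewrite /= !sumr_const !card_ord -[_ *+ N]mulr_natr -[_ *+ M]mulr_natr /a natrM.
by rewrite le_eqVlt; apply/orP; left; apply/eqP; field; rewrite Nn0 Mn0.
Qed.

Lemma vintegral_sub_le (g : R -> V) (h K : R) (c : V) (rho : R) : 0 <= h -> 0 <= K ->
  (forall s s', 0 <= s <= h -> 0 <= s' <= h -> rnorm (g s - g s') <= K * `|s - s'|) ->
  (forall s, 0 <= s <= h -> rnorm (g s - c) <= rho) ->
  rnorm (vintegral g 0 h - h%:C *: c) <= h * rho.
Proof.
move=> h0 K0 g_lip g_near.
have sums_cvg : riemann_sum g 0 h @ \oo --> vintegral g 0 h.
  apply: rdist_cauchy_cvg => e e0.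
  pose B := K * h ^+ 2; have B0 : 0 <= B by rewrite mulr_ge0 ?exprn_ge0.
  pose N := Num.truncn (2 * B / e).
  have BN : 2 * B / e < N.+1%:R by apply: truncnS_gt.
  exists N => n Nn; rewrite !riemann_sumE.
  have r1 := uniform_riemann_sum_refine (N := n.+1) (M := N.+1) h0 K0 isT isT g_lip.
  have r2 := uniform_riemann_sum_refine (N := N.+1) (M := n.+1) h0 K0 isT isT g_lip.
  rewrite mulnC -/B in r2; rewrite -/B in r1.
  apply: le_lt_trans (ler_rdistD _ (uniform_riemann_sum g h (n.+1 * N.+1)) _) _.
  rewrite [X in _ + X]rdistC; apply: le_lt_trans (lerD r1 r2) _.
  have Bn : B / n.+1%:R <= B / N.+1%:R.
    by rewrite ler_wpM2l // lef_pV2 ?posrE ?ltr0n // ler_nat.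
  have BNe : B / N.+1%:R < e / 2.
    by rewrite ltr_pdivrMr ?ltr0n //; move: BN; rewrite ltr_pdivrMr // mulrC; lra.
  by move: Bn BNe; set x := B / n.+1%:R; set y := B / N.+1%:R; lra.
apply: (rdist_lim_le (N := 0) sums_cvg) => n _; rewrite riemann_sumE.
exact: uniform_riemann_sum_sub_le.
Qed.

End RiemannSums.

Lemma bounded_analytic_bound (R : realType) (E : completeNormedModType R[i]) (T : R -> E -> E) :
  bounded_analytic T -> (forall x, T 0 x = x) ->
  exists2 M : R, 0 <= M & forall t x, 0 <= t -> rnorm (T t x) <= M * rnorm x.
Proof.
case=> d [/andP[d0 _] [Tc [[TcE _ _ _ _] Tc_bound]]] T_id.
have d2 : 0 < d / 2 < d by rewrite divr_gt0 //= ltr_pdivrMr //; lra.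
have [M HM] := Tc_bound _ d2.
exists (Num.max M 1) => [|t x t0]; first by rewrite le_max ler01 orbT.
have [->|tn0] := eqVneq t 0.
  by rewrite T_id ler_peMl ?rnorm_ge0 // le_max lexx orbT.
have sec : sector (d / 2) (t%:C : R[i]^o).
  exists t, 0; rewrite normr0 cos0 sin0 mulr1 mulr0; split => //; first by rewrite lt_def tn0.
  by case/andP: d2.
have := HM _ x sec; rewrite TcE // (normE x) => /rnorm_le /le_trans; apply.
by rewrite ler_wpM2r ?rnorm_ge0 // le_max lexx.
Qed.

Section DiagonalIntegral.
Variables (R : realType) (E : completeNormedModType R[i]) (g : R -> R -> E) (h Ka Kb : R).
Hypotheses (h0 : 0 <= h) (Ka0 : 0 <= Ka) (Kb0 : 0 <= Kb).
Hypothesis g_lip1 : forall a a' b, 0 <= a <= h -> 0 <= a' <= h -> 0 <= b <= h ->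
  rnorm (g a b - g a' b) <= Ka * `|a - a'|.
Hypothesis g_lip2 : forall a b b', 0 <= a <= h -> 0 <= b <= h -> 0 <= b' <= h ->
  rnorm (g a b - g a b') <= Kb * `|b - b'|.

Let g_lip a a' b b' : 0 <= a <= h -> 0 <= a' <= h -> 0 <= b <= h -> 0 <= b' <= h ->
  rnorm (g a b - g a' b') <= Ka * `|a - a'| + Kb * `|b - b'|.
Proof.
move=> ha ha' hb hb'; apply: le_trans (ler_rdistD _ (g a' b) _) _.
by apply: lerD; [exact: g_lip1 | exact: g_lip2].
Qed.

Lemma vintegral_diag_sub_le s0 s1 : 0 <= s0 <= h -> 0 <= s1 <= h ->
  rnorm (vintegral (fun s => g s s) 0 h - h%:C *: g s0 s1) <= (Ka + Kb) * h ^+ 2.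
Proof.
move=> hs0 hs1; rewrite expr2 mulrA mulrC.
apply: (vintegral_sub_le (K := Ka + Kb)) => // [|s s' hs hs'|s hs].
- exact: addr_ge0.
- by apply: le_trans (g_lip hs hs' hs hs') _; rewrite mulrDl.
- have dist_le a : 0 <= a <= h -> `|s - a| <= h.
    by case/andP: hs => ? ?; case/andP => ? ?; rewrite ler_norml; apply/andP; split; lra.
  apply: le_trans (g_lip hs hs0 hs hs1) _.
  by rewrite mulrDl lerD // ler_wpM2l // dist_le.
Qed.

End DiagonalIntegral.

Section SemigroupIntegrand.
Variables (R : realType) (E : completeNormedModType R[i]) (F : normedModType R[i]).
Variables (T : R -> E -> E) (S : R -> F -> F) (Ainv : E -> E) (D : F -> E).
Variables (MT MS MA MD tau : R).
Hypotheses (MT0 : 0 <= MT) (MS0 : 0 <= MS) (MA0 : 0 <= MA) (MD0 : 0 <= MD).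
Hypothesis T_lin : forall t, 0 <= t -> linear_map (T t).
Hypothesis T_id : forall x, T 0 x = x.
Hypothesis T_semi : forall t s x, 0 <= t -> 0 <= s -> T (t + s) x = T t (T s x).
Hypothesis T_bound : forall t x, 0 <= t -> rnorm (T t x) <= MT * rnorm x.
Hypothesis T_deriv_Ainv :
  forall z, (fun k : R => (k^-1)%:C *: (T k (Ainv z) - Ainv z)) @ at_right 0 --> z.
Hypothesis S_lin : forall t, 0 <= t -> linear_map (S t).
Hypothesis S_id : forall x, S 0 x = x.
Hypothesis S_semi : forall t s x, 0 <= t -> 0 <= s -> S (t + s) x = S t (S s x).
Hypothesis S_bound : forall t x, 0 <= t <= tau -> rnorm (S t x) <= MS * rnorm x.
Hypotheses (Ainv_lin : linear_map Ainv) (D_lin : linear_map D).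
Hypothesis Ainv_bound : forall x, rnorm (Ainv x) <= MA * rnorm x.
Hypothesis D_bound : forall x, rnorm (D x) <= MD * rnorm x.
Variables (v w : F).
Hypothesis S_deriv : (fun k : R => (k^-1)%:C *: (S k v - v)) @ at_right 0 --> w.

Lemma semigroup_integrand_estimate h s0 s1 : 0 <= h <= tau -> 0 <= s0 <= h -> 0 <= s1 <= h ->
  rnorm (vintegral (fun s => T (h - s) (Ainv (D (S s v)))) 0 h
         - h%:C *: T (h - s0) (Ainv (D (S s1 v))))
  <= (MT * MT * MD * MS * rnorm v + MT * MA * MD * MS * MS * rnorm w) * h ^+ 2.
Proof.
move=> /andP[h0 h_tau] hs0 hs1.
have in_tau a : 0 <= a <= h -> 0 <= a <= tau.
  by case/andP=> a0 ah; rewrite a0 (le_trans ah).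
have in_h a : 0 <= a <= h -> 0 <= h - a <= h.
  by case/andP=> a0 ah; rewrite subr_ge0 ah lerBlDr lerDl.
have T_bound' t x : 0 <= t <= h -> rnorm (T t x) <= MT * rnorm x.
  by case/andP=> t0 _; apply: T_bound.
apply: (vintegral_diag_sub_le (g := fun a b => T (h - a) (Ainv (D (S b v))))) => //
  [||a a' b ha ha' hb|a b b' ha hb hb'].
- by rewrite !mulr_ge0 ?rnorm_ge0.
- by rewrite !mulr_ge0 ?rnorm_ge0.
- have Dz : rnorm (D (S b v)) <= MD * MS * rnorm v.
    by rewrite -mulrA; apply: le_trans (D_bound _) (ler_wpM2l MD0 (S_bound _ (in_tau _ hb))).
  have := semigroup_orbit_lipschitz MT0 T_lin T_id T_semi T_bound' (T_deriv_Ainv (z := D (S b v)))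
    (in_h _ ha) (in_h _ ha').
  rewrite (_ : h - a - (h - a') = a' - a); last by ring.
  rewrite distrC => /le_trans; apply.
  by rewrite mulrAC ler_wpM2r // -2!mulrA ler_wpM2l ?mulr_ge0 // mulrA.
- have ha0 : 0 <= h - a by case/andP: (in_h _ ha).
  rewrite -(linear_mapB (T_lin ha0)) -(linear_mapB Ainv_lin) -(linear_mapB D_lin).
  apply: le_trans (T_bound _ ha0) _; rewrite -!mulrA ler_wpM2l //.
  apply: le_trans (Ainv_bound _) _; rewrite ler_wpM2l //.
  apply: le_trans (D_bound _) _; rewrite ler_wpM2l //.
  have := semigroup_orbit_lipschitz MS0 S_lin S_id S_semi S_bound S_deriv
    (in_tau _ hb) (in_tau _ hb').
  by rewrite -!mulrA [`|b - b'| * _]mulrC.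
Qed.

End SemigroupIntegrand.

Unset Implicit Arguments.
Theorem lemma4p4 (R : realType) (E F : completeNormedModType R[i])
  (domAm : set E) (Am : E -> E) (L : E -> F)
  (domB : set F) (B : F -> F)
  (T0 : R -> E -> E) (S : R -> F -> F)
  (D0 : F -> E) (A0inv : E -> E) :
  (* A_m, L, B linear operators; L surjective, graph-norm bounded *)
  lin_subspace domAm -> linear_on domAm Am -> linear_on domAm L ->
  (forall y, exists x, domAm x /\ L x = y) ->
  (exists M : R, forall x, domAm x -> `|L x| <= M%:C * (`|x| + `|Am x|)) ->
  lin_subspace domB -> linear_on domB B ->
  (* A_0 := A_m restricted to ker L generates a bounded analytic semigroup T_0 *)
  generates (domAm `&` [set x | L x = 0]) Am T0 ->
  bounded_analytic T0 ->
  (* B generates the C_0-semigroup S *)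
  generates domB B S ->
  (* x |-> (A_m x, L x) is closed *)
  closed [set p : E * (E * F) | exists x, domAm x /\ p = (x, (Am x, L x))] ->
  (* A_0 boundedly invertible, with inverse A0inv *)
  bounded_op A0inv ->
  (forall x, [/\ domAm (A0inv x), L (A0inv x) = 0 & Am (A0inv x) = x]) ->
  (forall x, domAm x -> L x = 0 -> A0inv (Am x) = x) ->
  (* B boundedly invertible *)
  (exists Binv : F -> F, [/\ bounded_op Binv,
       (forall y, domB (Binv y) /\ B (Binv y) = y) &
       (forall y, domB y -> Binv (B y) = y)]) ->
  (* D_0 = (L restricted to ker A_m)^{-1}, a bounded operator F -> E *)
  (forall y, [/\ domAm (D0 y), Am (D0 y) = 0 & L (D0 y) = y]) ->
  bounded_op D0 ->
  (* Q(t) extends to bounded operators with limsup_{t -> 0+} ||Q(t)|| < oo *)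
  (exists Q : R -> F -> E,
     [/\ (forall t, 0 <= t -> bounded_op (Q t)),
         (forall t y, 0 <= t -> domB y ->
            Q t y = D0 (S t y) - T0 t (D0 y)
                    - vintegral (fun s : R => T0 (t - s) (D0 (S s (B y)))) 0 t) &
         (exists (M d : R), 0 < d /\
            forall t y, 0 < t < d -> `|Q t y| <= M%:C * `|y|)]) ->
  forall tmax : R, 0 < tmax ->
  exists C : R, 0 <= C /\
  forall (h s0 s1 : R) (y : F),
    0 <= h <= tmax -> 0 <= s0 <= h -> 0 <= s1 <= h ->
    domB y -> domB (B y) ->
    `| vintegral (fun s : R => T0 (h - s) (A0inv (D0 (S s (B y))))) 0 h
       - h%:C *: T0 (h - s0) (A0inv (D0 (S s1 (B y)))) |
    <= (C * h ^+ 2)%:C * (`|B y| + `|B (B y)|).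
Proof.
move=> _ _ _ _ _ _ _ [[T_bdd T_id T_semi _] T_gen] T_analytic [[S_bdd S_id S_semi S_cont] S_gen].
move=> _ A0inv_bdd A0inv_right _ _ _ D0_bdd _ tmax _.
have [MT MT0 T_bound] := bounded_analytic_bound T_analytic T_id.
have [MS MS0 S_bound] := C0_semigroup_bounded_on S_bdd S_id S_cont S_semi tmax.
have [MA MA0 A0inv_bound] := bounded_opP A0inv_bdd.
have [MD MD0 D0_bound] := bounded_opP D0_bdd.
have A0inv_deriv z : (fun k : R => (k^-1)%:C *: (T0 k (A0inv z) - A0inv z)) @ at_right 0 --> z.
  by have [dz Lz Az] := A0inv_right z; rewrite -{3}Az; exact: (T_gen _).2 (conj dz Lz).
pose a := MT * MT * MD * MS; pose b := MT * MA * MD * MS * MS.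
have a0 : 0 <= a by rewrite !mulr_ge0.
have b0 : 0 <= b by rewrite !mulr_ge0.
exists (a + b); split => [|h s0 s1 y hh hs0 hs1 _ dBy]; first exact: addr_ge0.
have := semigroup_integrand_estimate MT0 MS0 MA0 MD0 (fun t t0 => (T_bdd t t0).1) T_id T_semi
  T_bound A0inv_deriv (fun t t0 => (S_bdd t t0).1) S_id S_semi S_bound A0inv_bdd.1 D0_bdd.1
  A0inv_bound D0_bound ((S_gen (B y)).2 dBy) hh hs0 hs1.
rewrite normE !(normE (B _)) -rmorphD -rmorphM lecR -/a -/b => /le_trans; apply.
rewrite [X in _ <= X]mulrAC; apply: ler_wpM2r; first exact: sqr_ge0.
rewrite mulrDl !mulrDr.
by have := mulr_ge0 a0 (rnorm_ge0 (B (B y))); have := mulr_ge0 b0 (rnorm_ge0 (B y)); lra.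
Qed.
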